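(* There exist infinitely many finite simple graphs $G$ with $\chi_{DP}(G) < AT(G)$; moreover, for every real $M > 0$ there exists a finite simple graph $G$ with $AT(G) / \chi_{DP}(G) > M$.
   Context: Alon--Tarsi number: for a digraph $D$, an Eulerian subdigraph is a spanning subdigraph $F$ with $d^+_F(v) = d^-_F(v)$ for all $v$, called even or odd according to the parity of its number of edges; $AT(G)$ is the minimum $k$ such that some orientation $D$ of $G$ has all outdegrees less than $k$ and the numbers of even and odd Eulerian subdigraphs of $D$ differ. Correspondence coloring: a correspondence assignment $(L,C)$ for $G$ consists of a list $L(v)$ of colors for each vertex $v$ and, for each edge $uv$, a partial matching $C_{uv}$ between $\{u\}\times L(u)$ and $\{v\}\times L(v)$. An $(L,C)$-coloring is a choice $\phi(v)\in L(v)$ for each $v$ such that for every edge $uv$, $(u,\phi(u))$ and $(v,\phi(v))$ are not matched in $C_{uv}$. $G$ is $k$-correspondence-colorable if it has an $(L,C)$-coloring for every correspondence assignment with all lists of size $k$; the correspondence chromatic number $\chi_{DP}(G)$ is the least such $k$. *)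

From mathcomp Require Import all_boot all_order all_algebra.
From mathcomp Require Export reals.
Set Implicit Arguments. Unset Strict Implicit. Unset Printing Implicit Defensive.

Section Defs.
Variable V : finType.

Definition simple_graph (e : rel V) : Prop :=
  (forall u v, e u v = e v u) /\ (forall v, ~~ e v v).

Definition orientation (e : rel V) (d : rel V) : Prop :=
  forall u v, e u v = (d u v || d v u) /\ ~~ (d u v && d v u).

Definition outdeg (d : rel V) (v : V) : nat := #|[set w | d v w]|.

Definition eulerian_sub (d : rel V) (F : {set V * V}) : bool :=
  (F \subset [set p | d p.1 p.2]) &&
  [forall v, #|[set p in F | p.1 == v]| == #|[set p in F | p.2 == v]|].

Definition EE (d : rel V) : nat :=
  #|[set F : {set V * V} | eulerian_sub d F && ~~ odd #|F|]|.
Definition EO (d : rel V) : nat :=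
  #|[set F : {set V * V} | eulerian_sub d F && odd #|F|]|.

Definition AT_ok (e : rel V) (k : nat) : Prop :=
  exists d : rel V, orientation e d /\ (forall v, outdeg d v < k) /\ EE d <> EO d.

Definition is_AT (e : rel V) (k : nat) : Prop :=
  AT_ok e k /\ forall j, AT_ok e j -> k <= j.

(* Correspondence assignment (L, C) with lists of size k; colors are nats.
   C u v c c' means (u,c) and (v,c') are matched in C_{uv}. *)
Definition corr_assignment (e : rel V) (k : nat)
    (L : V -> seq nat) (C : V -> V -> rel nat) : Prop :=
  (forall v, uniq (L v) /\ size (L v) = k) /\
  (forall u v c c', C u v c c' = C v u c' c) /\
  (forall u v c c', C u v c c' -> [/\ e u v, c \in L u & c' \in L v]) /\
  (forall u v c c1 c2, C u v c c1 -> C u v c c2 -> c1 = c2).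

Definition corr_coloring (e : rel V) (L : V -> seq nat) (C : V -> V -> rel nat)
    (phi : V -> nat) : Prop :=
  (forall v, phi v \in L v) /\ (forall u v, e u v -> ~~ C u v (phi u) (phi v)).

Definition corr_colorable (e : rel V) (k : nat) : Prop :=
  forall L C, corr_assignment e k L C -> exists phi, corr_coloring e L C phi.

Definition is_chiDP (e : rel V) (k : nat) : Prop :=
  corr_colorable e k /\ forall j, corr_colorable e j -> k <= j.

End Defs.

From mathcomp Require Import all_boot all_order all_algebra.
From mathcomp Require Import reals.
From mathcomp Require Import lra ring zify.
From Stdlib Require Import Classical.
From Stdlib Require Wf_nat.
Set Implicit Arguments.
Unset Strict Implicit.
Unset Printing Implicit Defensive.
Import Order.TTheory GRing.Theory Num.Theory.
Local Open Scope ring_scope.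

(* The witnesses are the complete bipartite graphs K_{m,m}.  An orientation of
   K_{m,m} has m^2 arcs on 2m vertices, so some outdegree is at least m/2 and
   AT(K_{m,m}) > m/2, while orienting every edge from left to right leaves only
   the empty Eulerian subdigraph, so AT(K_{m,m}) exists.  For a correspondence
   assignment with lists of size k, colour the left side one vertex at a time by
   the method of conditional expectations: were the left side coloured uniformly
   at random, a fixed colour of a right vertex would be blocked after j left
   vertices with probability at most q_j = 1 - (1 - 1/k)^j, and all k colours of
   it with probability at most q_m^k, so m q_m^k < 1 yields a colouring.  With
   s = 2t 2^t, m = st and k = 2s one gets m q_m^k <= m 2^{-4t} < 1, hence
   chi_DP(K_{m,m}) <= 2s while AT(K_{m,m}) > st/2, a ratio above t/4. *)

Lemma sumr_const_seq (R : pzSemiRingType) (T : Type) (s : seq T) (x : R) :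
  \sum_(a <- s) x = (size s)%:R * x.
Proof. by rewrite big_const_seq count_predT iter_addr addr0 mulr_natl. Qed.

Section Estimates.
Variable R : realFieldType.
Implicit Types (x d z q : R) (n : nat).

Lemma bernoulli_ineq x d n : 0 <= x -> 0 <= x + d ->
  x ^+ n.+1 + n.+1%:R * x ^+ n * d <= (x + d) ^+ n.+1.
Proof.
move=> x0 xd0; elim: n => [|n IH]; first by rewrite !expr1 expr0 mulr1 mul1r.
have := ler_wpM2l xd0 IH.
have := mulr_ge0 (mulr_ge0 (ler0n R n.+1) (exprn_ge0 n x0)) (sqr_ge0 d).
rewrite [(x + d) ^+ n.+2]exprS [x ^+ n.+2]exprS [x ^+ n.+1]exprS -!natr1; nra.
Qed.

Lemma bernoulli_oneB z n : 0 <= z <= 1 -> 1 - n%:R * z <= (1 - z) ^+ n.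
Proof.
case: n => [|n] /andP[z0 z1]; first by rewrite mul0r subr0 expr0.
have z1' : 0 <= 1 - z by lra.
by have := @bernoulli_ineq 1 (- z) n ler01 z1'; rewrite !expr1n mulr1 mulrN.
Qed.

Lemma expr_oneB_le_inv z n : 0 <= z <= 1 -> (1 - z) ^+ n <= (1 + n%:R * z)^-1.
Proof.
case: n => [|n] /andP[z0 z1]; first by rewrite mul0r addr0 expr0 invr1.
have := @bernoulli_ineq 1 z n ler01; rewrite !expr1n mulr1 => lower.
have prod1 : (1 - z) ^+ n.+1 * (1 + z) ^+ n.+1 <= 1.
  by rewrite -exprMn exprn_ile1 //; nra.
have : 0 <= (1 - z) ^+ n.+1 by rewrite exprn_ge0 //; lra.
have c0 : 0 < 1 + n.+1%:R * z by rewrite ltr_pwDl // mulr_ge0.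
rewrite -div1r ler_pdivlMr //; nra.
Qed.

Lemma sum_expr_subn_le (T : Type) (s : seq T) (r : T -> nat) q N :
  0 <= q <= 1 -> (0 < size s)%N -> (forall a, r a <= 1)%N ->
  (\sum_(a <- s) r a <= N)%N ->
  \sum_(a <- s) q ^+ (N - r a) <= (size s)%:R * (q + (1 - q) / (size s)%:R) ^+ N.
Proof.
move=> /andP[q0 q1] s_gt0 r_le1; case: N => [_|N sum_r].
  by under eq_bigr do rewrite sub0n; rewrite sumr_const_seq !expr0.
have term a : q ^+ (N.+1 - r a) = q ^+ N.+1 + (r a)%:R * (q ^+ N - q ^+ N.+1).
  have := r_le1 a; case: (r a) => [|[]] // _; first by rewrite subn0 mul0r addr0.
  by rewrite subn1 mul1r addrC subrK.
under eq_bigr do rewrite term.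
set k : R := (size s)%:R; have k_gt0 : 0 < k by rewrite ltr0n.
have d0 : 0 <= (1 - q) / k by rewrite divr_ge0 //; lra.
have gap : 0 <= q ^+ N - q ^+ N.+1 by rewrite exprS subr_ge0 ler_piMl ?exprn_ge0.
rewrite big_split /= sumr_const_seq -mulr_suml -natr_sum -/k.
have := @bernoulli_ineq q ((1 - q) / k) N q0 (addr_ge0 q0 d0).
move=> /(ler_wpM2l (ltW k_gt0)); apply: le_trans; rewrite [leRHS]mulrDr lerD2l.
have -> : k * (N.+1%:R * q ^+ N * ((1 - q) / k)) = N.+1%:R * (q ^+ N - q ^+ N.+1).
  by rewrite exprS; field; rewrite gt_eqF.
by rewrite ler_wpM2r // ler_nat.
Qed.

Lemma oneB_invn_bounds k : 0 <= 1 - (k%:R^-1 : R) <= 1.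
Proof.
case: k => [|k]; first by rewrite invr0 subr0 ler01 lexx.
by rewrite subr_ge0 invf_le1 ?ltr0n // ler1n /= gerBl invr_ge0.
Qed.

(* An upper bound on the probability that a fixed colour of a vertex is blocked
   once [j] of its neighbours receive independent uniform colours from lists of
   size [k]. *)
Definition block_prob (k j : nat) : R := 1 - (1 - k%:R^-1) ^+ j.

Lemma block_prob_bounds k j : 0 <= block_prob k j <= 1.
Proof.
have /andP[x0 x1] := oneB_invn_bounds k.
have := exprn_ge0 j x0; have := exprn_ile1 j x0 x1.
by rewrite /block_prob => *; apply/andP; split; lra.
Qed.

Lemma block_probS k j :
  block_prob k j.+1 = block_prob k j + (1 - block_prob k j) / k%:R.
Proof. by rewrite /block_prob exprS; ring. Qed.

Lemma block_prob_double_le s t :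
  (0 < s)%N -> block_prob (2 * s) (s * t) <= 1 - (2 ^ t)%:R^-1.
Proof.
move=> s_gt0; set z : R := (2 * s)%:R^-1.
have z_bounds : 0 <= z <= 1.
  by rewrite invr_ge0 ler0n invf_le1 ?ltr0n ?ler1n ?muln_gt0.
have half : 2^-1 <= (1 - z) ^+ s.
  have e : s%:R * z = 2^-1.
    by rewrite /z natrM invfM mulrCA mulfV ?mulr1 // pnatr_eq0 -lt0n.
  by have := @bernoulli_oneB z s z_bounds; rewrite e; lra.
rewrite /block_prob -/z lerD2l lerN2 exprM natrX -exprVn.
by rewrite lerXn2r // nnegrE ?exprn_ge0 //; lra.
Qed.

Lemma expr_oneB_invn_le P r :
  (0 < P)%N -> (1 - P%:R^-1) ^+ (P * r) <= (2 ^ r)%:R^-1 :> R.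
Proof.
move=> P_gt0; have /andP[x0 x1] := oneB_invn_bounds P.
have z_bounds : 0 <= (P%:R^-1 : R) <= 1 by apply/andP; split; lra.
have := @expr_oneB_le_inv _ P z_bounds.
rewrite mulfV ?pnatr_eq0 -?lt0n // exprM natrX -exprVn => half.
by rewrite lerXn2r // nnegrE ?exprn_ge0 //; lra.
Qed.
End Estimates.

Lemma count_le1 (T : eqType) (P : pred T) (s : seq T) :
  uniq s -> (forall x y, P x -> P y -> x = y) -> (count P s <= 1)%N.
Proof.
move=> s_uniq P_single; elim: s s_uniq => [|x s IH] //= /andP[x_s s_uniq].
case Px: (P x) => /=; last exact: IH.
rewrite ltnS leqn0 eqn0Ngt -has_count; apply/negP => /hasP[y ys Py].
by move: x_s; rewrite (P_single _ _ Px Py) ys.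
Qed.

Lemma has_lt1_of_sum_lt (R : realDomainType) (T : eqType) (s : seq T) (F : T -> R) :
  \sum_(a <- s) F a < (size s)%:R -> has (fun a => F a < 1) s.
Proof.
apply: contraLR => /hasPn F_ge1; rewrite -leNgt -[leLHS]mulr1 -sumr_const_seq.
by rewrite big_seq [leRHS]big_seq; apply: ler_sum => a /F_ge1; rewrite leNgt.
Qed.

Section GreedyColoring.
Variables (R : realFieldType) (V : finType) (k : nat).
Variables (L : V -> seq nat) (C : V -> V -> rel nat).
Hypotheses (k_gt0 : (0 < k)%N) (L_uniq : forall v, uniq (L v))
  (L_size : forall v, size (L v) = k).
Hypothesis C_fun : forall u v a c1 c2, C u v a c1 -> C u v a c2 -> c1 = c2.
Hypothesis C_inj : forall u v a1 a2 c, C u v a1 c -> C u v a2 c -> a1 = a2.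

Definition free_color (ch : V -> nat) (us : seq V) (w : V) (c : nat) : bool :=
  all (fun u => ~~ C u w (ch u) c) us.

Lemma potential_average u w j (S : seq nat) : uniq S ->
  \sum_(a <- L u) block_prob R k j ^+ size [seq c <- S | ~~ C u w a c]
    <= k%:R * block_prob R k j.+1 ^+ size S.
Proof.
move=> S_uniq; pose r a := count (C u w a) S.
have r_le1 a : (r a <= 1)%N by apply: count_le1 => // ?; apply: C_fun.
have sum_r : (\sum_(a <- L u) r a <= size S)%N.
  rewrite /r; under eq_bigr => a _ do rewrite -sum1_count big_mkcond.
  rewrite exchange_big -sum1_size; apply: leq_sum => c _ /=.
  rewrite -big_mkcond sum1_count; apply: count_le1 => // ? ?; exact: C_inj.
have size_filter_r a : size [seq c <- S | ~~ C u w a c] = (size S - r a)%N.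
  by rewrite size_filter -(count_predC (C u w a) S) addKn.
under eq_bigr do rewrite size_filter_r.
rewrite block_probS -(L_size u); apply: sum_expr_subn_le => //.
  exact: block_prob_bounds.
by rewrite L_size.
Qed.

(* The sum is a pessimistic estimator of the expected number of vertices of [B]
   left without a free colour in [S] if [us] were coloured at random; by
   [potential_average] some colour of the next vertex does not increase it. *)
Lemma greedy_partial_coloring (B : {set V}) us : uniq us ->
  forall S : V -> seq nat, (forall w, uniq (S w)) ->
  \sum_(w in B) block_prob R k (size us) ^+ size (S w) < 1 ->
  exists ch, {in us, forall u, ch u \in L u} /\
             {in B, forall w, has (free_color ch us w) (S w)}.
Proof.
elim: us => [|u us IH] /= => [_|/andP[u_us us_uniq]] S S_uniq pot_lt1.
  exists (fun _ => 0%N); split => // w wB; rewrite has_predT lt0n size_eq0.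
  apply: contraTneq pot_lt1 => Sw_nil; rewrite -leNgt (bigD1 w) //= Sw_nil expr0.
  have /andP[Q_ge0 _] := block_prob_bounds R k 0.
  by rewrite lerDl sumr_ge0 // => v _; rewrite exprn_ge0.
pose F a :=
  \sum_(w in B) block_prob R k (size us) ^+ size [seq c <- S w | ~~ C u w a c].
have : has (fun a => F a < 1) (L u).
  apply: has_lt1_of_sum_lt; rewrite L_size /F exchange_big /=.
  apply: (@le_lt_trans _ _
    (\sum_(w in B) k%:R * block_prob R k (size us).+1 ^+ size (S w))).
    by apply: ler_sum => w _; exact: potential_average.
  by rewrite -mulr_sumr -[ltRHS]mulr1 ltr_pM2l // ltr0n.
case/hasP => a a_Lu /(IH us_uniq _ (fun w => filter_uniq _ (S_uniq w))).
case=> ch [ch_L ch_free].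
exists (fun v => if v == u then a else ch v); split.
  by move=> v; rewrite inE; case: eqP => [-> //|_ /= v_us]; apply: ch_L.
move=> w wB; have /hasP[c] := ch_free w wB.
rewrite mem_filter => /andP[uncovered cS] c_free.
apply/hasP; exists c => //=; rewrite eqxx uncovered; apply/allP => v v_us /=.
by case: eqP => [v_u|_]; [move: u_us; rewrite -v_u v_us | exact: (allP c_free)].
Qed.

End GreedyColoring.

Lemma bipartite_corr_colorable (R : realFieldType) (V : finType) (e : rel V)
    (A : {set V}) k :
  (forall u v, e u v -> (u \in A) != (v \in A)) -> (0 < k)%N ->
  #|~: A|%:R * block_prob R k #|A| ^+ k < 1 -> corr_colorable e k.
Proof.
move=> e_bip k_gt0 pot_lt1 L C [L_ok [C_sym [_ C_fun]]].
have C_inj u v a1 a2 c : C u v a1 c -> C u v a2 c -> a1 = a2.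
  by rewrite !(C_sym u v); exact: C_fun.
have L_uniq v : uniq (L v) by case: (L_ok v).
have L_size v : size (L v) = k by case: (L_ok v).
have pot : \sum_(w in ~: A) block_prob R k (size (enum A)) ^+ size (L w) < 1.
  by under eq_bigr do rewrite L_size; rewrite sumr_const -cardE -mulr_natl.
have [ch [ch_L ch_free]] :=
  greedy_partial_coloring k_gt0 L_uniq L_size C_fun C_inj (enum_uniq A) L_uniq pot.
pose phi v := if v \in A then ch v
              else nth 0%N (L v) (find (free_color C ch (enum A) v) (L v)).
have phi_B v : v \notin A -> phi v \in L v /\ free_color C ch (enum A) v (phi v).
  move=> vA; have /ch_free has_free : v \in ~: A by rewrite inE.
  by rewrite /phi (negbTE vA) mem_nth -?has_find // nth_find.
have across u v : u \in A -> v \notin A -> ~~ C u v (phi u) (phi v).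
  move=> uA vA; have [_ /allP v_free] := phi_B v vA.
  by have := v_free u; rewrite mem_enum /phi uA => ->.
exists phi; split=> [v|u v /e_bip].
  case vA: (v \in A); last by case: (phi_B v (negbT vA)).
  by rewrite /phi vA ch_L ?mem_enum.
case uA: (u \in A); case vA: (v \in A) => //= _; first by rewrite across ?uA ?vA.
by rewrite C_sym across ?uA ?vA.
Qed.

Lemma ex_minimal (P : nat -> Prop) n :
  P n -> exists a, P a /\ forall j, P j -> (a <= j)%N.
Proof.
move=> Pn; have [a [[Pa a_min] _]] := Wf_nat.dec_inh_nat_subset_has_unique_least_element
  P (fun j => classic (P j)) (ex_intro _ n Pn).
by exists a; split=> // j /a_min /ssrnat.leP.
Qed.

Section AlonTarsi.
Variable V : finType.
Implicit Types (e d : rel V).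

Lemma outdegE d v : outdeg d v = (\sum_w d v w)%N.
Proof. by rewrite /outdeg cardsE -sum1_card big_mkcond. Qed.

Lemma sum_outdeg_orientation e d :
  orientation e d -> (\sum_v outdeg e v = (\sum_v outdeg d v).*2)%N.
Proof.
move=> e_d; under eq_bigr do rewrite outdegE.
under [in RHS]eq_bigr do rewrite outdegE.
rewrite -addnn [X in _ = _ + X]exchange_big -big_split; apply: eq_bigr => v _.
rewrite -big_split; apply: eq_bigr => w _ /=; have [-> ] := e_d v w.
by case: (d v w); case: (d w v).
Qed.

Lemma AT_ok_sum_outdeg e a :
  AT_ok e a -> (\sum_v outdeg e v <= (#|V| * a.-1).*2)%N.
Proof.
case=> d [e_d [outdeg_lt _]]; rewrite (sum_outdeg_orientation e_d) leq_double.
rewrite -sum_nat_const; apply: leq_sum => v _.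
by rewrite -ltnS prednK // (leq_ltn_trans _ (outdeg_lt v)).
Qed.

Lemma bipartite_orientation_EE_EO d (P : pred V) :
  (forall u v, d u v -> P u && ~~ P v) -> EE d = 1%N /\ EO d = 0%N.
Proof.
move=> d_P.
have eulerian_set0 F : eulerian_sub d F = (F == set0).
  apply/idP/eqP => [/andP[/subsetP F_d /forallP balanced] | ->]; last first.
    rewrite /eulerian_sub sub0set; apply/forallP => v.
    by rewrite !setIdE !set0I cards0.
  have F_P q : q \in F -> P q.1 && ~~ P q.2 by move/F_d; rewrite inE; exact: d_P.
  apply/setP => p; rewrite inE; apply/negP => pF; have /andP[Pp1 _] := F_P p pF.
  have no_in : [set q in F | q.2 == p.1] = set0.
    apply/setP => q; rewrite !inE; apply/negbTE/negP => /andP[/F_P + /eqP q2].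
    by rewrite q2 Pp1 andbF.
  have := balanced p.1; rewrite no_in cards0 cards_eq0 => /eqP/setP/(_ p).
  by rewrite !inE pF eqxx.
have EE_set : [set F | eulerian_sub d F && ~~ odd #|F|] = [set set0].
  by apply/setP => F; rewrite !inE eulerian_set0; case: eqP => // ->; rewrite cards0.
have EO_set : [set F | eulerian_sub d F && odd #|F|] = set0.
  by apply/setP => F; rewrite !inE eulerian_set0; case: eqP => // ->; rewrite cards0.
by rewrite /EE /EO EE_set EO_set cards1 cards0.
Qed.
End AlonTarsi.

Section CompleteBipartite.
Variable m : nat.

Definition Kmm : rel 'I_(m + m) := fun u v => (u < m)%N != (v < m)%N.

Definition Kmm_left : {set 'I_(m + m)} := [set v : 'I_(m + m) | (v < m)%N].

Lemma Kmm_simple : simple_graph Kmm.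
Proof. by split=> [u v|v]; rewrite /Kmm ?eqxx // eq_sym. Qed.

Lemma card_Kmm_left : #|Kmm_left| = m.
Proof.
rewrite -sum1_card big_mkcond big_split_ord /=.
rewrite (eq_bigr (fun _ => 1%N)) => [|i _]; last by rewrite inE /= ltn_ord.
rewrite [X in (_ + X)%N]big1 => [|j _]; last by rewrite inE /= ltnNge leq_addr.
by rewrite sum_nat_const card_ord muln1 addn0.
Qed.

Lemma card_Kmm_right : #|~: Kmm_left| = m.
Proof. by rewrite cardsCs setCK card_Kmm_left card_ord addnK. Qed.

Lemma outdeg_Kmm v : outdeg Kmm v = m.
Proof.
rewrite /outdeg.
have -> : [set w | Kmm v w] = if (v < m)%N then ~: Kmm_left else Kmm_left.
  by apply/setP => w; rewrite /Kmm; case: (v < m)%N; rewrite !inE; case: (w < m)%N.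
by case: (v < m)%N; rewrite ?card_Kmm_left ?card_Kmm_right.
Qed.

Lemma AT_ok_Kmm : AT_ok Kmm (m + m).+1.
Proof.
pose d : rel 'I_(m + m) := fun u v => (u < m)%N && ~~ (v < m)%N.
have [EE1 EO0] :=
  @bipartite_orientation_EE_EO _ d (fun v : 'I_(m + m) => (v < m)%N) (fun _ _ => id).
exists d; split; [|split].
- by move=> u v; rewrite /Kmm /d; case: (u < m)%N; case: (v < m)%N.
- by move=> v; rewrite ltnS -{2}(card_ord (m + m)) max_card.
- by rewrite EE1 EO0.
Qed.

Lemma AT_ok_Kmm_gt a : (0 < m)%N -> AT_ok Kmm a -> (m < 2 * a)%N.
Proof.
move=> m_gt0 /AT_ok_sum_outdeg; under eq_bigr do rewrite outdeg_Kmm.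
rewrite sum_nat_const card_ord; case: a => [|a] /=; nia.
Qed.

Lemma is_AT_Kmm : (0 < m)%N -> exists a, is_AT Kmm a /\ (m < 2 * a)%N.
Proof.
move=> m_gt0; have [a [ATa a_min]] := ex_minimal AT_ok_Kmm.
by exists a; split; [split | exact: AT_ok_Kmm_gt].
Qed.

Lemma is_chiDP_Kmm (R : realFieldType) k : (0 < m)%N -> (0 < k)%N ->
  m%:R * block_prob R k m ^+ k < 1 -> exists b, is_chiDP Kmm b /\ (0 < b <= k)%N.
Proof.
move=> m_gt0 k_gt0 pot_lt1.
have colorable : corr_colorable Kmm k.
  apply: (@bipartite_corr_colorable R _ _ Kmm_left) => //.
    by move=> u v; rewrite !inE.
  by rewrite card_Kmm_left card_Kmm_right.
have [b [col_b b_min]] := ex_minimal colorable.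
exists b; split; first by split.
rewrite b_min // andbT lt0n; apply/eqP => b0; move: col_b; rewrite b0.
have v0 : 'I_(m + m) by exists 0%N; rewrite addn_gt0 m_gt0.
case/(_ (fun _ => [::]) (fun _ _ _ _ => false)) => [|phi [phi_L _]].
  by do !split.
by have := phi_L v0.
Qed.

End CompleteBipartite.

Arguments Kmm m : clear implicits.

Lemma ltn_mul_pow2_exp4 t : (0 < t)%N -> (2 * t * 2 ^ t * t < 2 ^ (4 * t))%N.
Proof.
move=> t_gt0; have t_lt := ltn_expl t (ltnSn 1).
have two_le : (2 <= 2 ^ t)%N by rewrite -{1}(expn1 2) leq_exp2l.
have -> : (2 ^ (4 * t) = 2 ^ t * 2 ^ t * (2 ^ t * 2 ^ t))%N.
  by rewrite -!expnD; congr (2 ^ _)%N; lia.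
move: t_lt two_le; set P := (2 ^ t)%N => t_lt two_le.
have sq_lt : (t * t < P * P)%N by apply: ltn_mul.
have dbl_le : (2 * P <= P * P)%N by rewrite leq_mul2r two_le orbT.
have -> : (2 * t * P * t = t * t * (2 * P))%N by lia.
apply: leq_ltn_trans (leq_mul (leqnn _) dbl_le) _.
by rewrite ltn_pmul2r // muln_gt0 (leq_trans _ two_le).
Qed.

Lemma Kmm_potential_lt1 (R : realFieldType) s t :
  (0 < t)%N -> s = (2 * t * 2 ^ t)%N ->
  (s * t)%:R * block_prob R (2 * s) (s * t) ^+ (2 * s) < 1.
Proof.
move=> t_gt0 s_def; set P := (2 ^ t)%N in s_def.
have P_gt0 : (0 < P)%N by rewrite expn_gt0.
have s_gt0 : (0 < s)%N by rewrite s_def !muln_gt0 t_gt0 P_gt0.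
have Q_le := block_prob_double_le R t s_gt0.
have /andP[Q_ge0 _] := block_prob_bounds R (2 * s) (s * t).
have /andP[base_ge0 _] := oneB_invn_bounds R P.
set Q := block_prob R (2 * s) (s * t) in Q_le Q_ge0 *.
have : Q ^+ (2 * s) <= (2 ^ (4 * t))%:R^-1.
  rewrite (_ : 2 * s = P * (4 * t))%N; last by rewrite s_def; lia.
  apply: le_trans (expr_oneB_invn_le R (4 * t) P_gt0).
  by rewrite lerXn2r.
move=> /(ler_wpM2l (ler0n R (s * t))) /le_lt_trans; apply.
rewrite ltr_pdivrMr ?ltr0n ?expn_gt0 // mul1r ltr_nat s_def.
exact: ltn_mul_pow2_exp4.
Qed.

Lemma Kmm_AT_chiDP_gap t : (0 < t)%N -> exists m a b,
  [/\ (t <= m)%N, is_AT (Kmm m) a, is_chiDP (Kmm m) b, (0 < b)%N & (b * t < 4 * a)%N].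
Proof.
move=> t_gt0; pose s := (2 * t * 2 ^ t)%N.
have s_gt0 : (0 < s)%N by rewrite !muln_gt0 t_gt0 expn_gt0.
have m_gt0 : (0 < s * t)%N by rewrite muln_gt0 s_gt0.
have [a [ATa m_lt]] := is_AT_Kmm m_gt0.
have k_gt0 : (0 < 2 * s)%N by rewrite muln_gt0.
have [b [chib /andP[b_gt0 b_le]]] :=
  is_chiDP_Kmm m_gt0 k_gt0 (Kmm_potential_lt1 rat t_gt0 (erefl s)).
by exists (s * t)%N, a, b; split; rewrite ?leq_pmull //; nia.
Qed.

Theorem corollary2 :
  (forall N : nat, exists (n : nat) (e : rel 'I_n),
     (N <= n)%N /\ simple_graph e /\
     exists a b : nat, is_AT e a /\ is_chiDP e b /\ (b < a)%N) /\
  (forall (R : realType) (M : R), 0 < M ->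
     exists (n : nat) (e : rel 'I_n), simple_graph e /\
     exists a b : nat, is_AT e a /\ is_chiDP e b /\ M < a%:R / b%:R).
Proof.
split=> [N | R M M_gt0].
  have [m [a [b [N_le ATa chib _ gap]]]] := Kmm_AT_chiDP_gap (ltn0Sn N.+3).
  exists (m + m)%N, (Kmm m); split; first lia.
  by split; [exact: Kmm_simple | exists a, b; do !split => //; nia].
have t_gt := archi_boundP (ltW (mulr_gt0 (ltr0n R 4) M_gt0)).
set t := Num.Def.archi_bound _ in t_gt.
have [m [a [b [_ ATa chib b_gt0 gap]]]] := Kmm_AT_chiDP_gap (ltn0Sn t).
exists (m + m)%N, (Kmm m); split; first exact: Kmm_simple.
exists a, b; do !split => //; rewrite ltr_pdivlMr ?ltr0n //.
have : (b * t.+1)%:R < (4 * a)%:R :> R by rewrite ltr_nat.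
rewrite !natrM -natr1 => gapR.
have : 0 <= (b%:R : R) by rewrite ler0n.
have : 0 < (b%:R : R) by rewrite ltr0n.
nra.
Qed.
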